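(* Let $K, L$ be compact convex subsets of $\mathbb{R}^n$ and let $\psi: \mathbb{R}^n \to \mathbb{R}^n$ be a nonsingular linear transformation. Then, for every unit vector $u$, $L_u$ contains a translate of $K_u$ if and only if, for every unit vector $u$, $(\psi L)_u$ contains a translate of $(\psi K)_u$.
   Context: For a set $S \subseteq \mathbb{R}^n$ and a unit vector $u$, $S_u$ denotes the orthogonal projection of $S$ onto the hyperplane $u^\perp$. ''$A$ contains a translate of $B$'' means $B + w \subseteq A$ for some vector $w$ (in $u^\perp$). *)

From Stdlib Require Import Reals.
From mathcomp Require Import all_boot.
Set Implicit Arguments. Unset Strict Implicit.

Open Scope R_scope.

Definition vec (n : nat) := 'I_n -> R.

Definition vadd n (x y : vec n) : vec n := fun i => x i + y i.
Definition vscale n (a : R) (x : vec n) : vec n := fun i => a * x i.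
Definition vzero n : vec n := fun _ => 0.

Definition dot n (x y : vec n) : R := \big[Rplus/R0]_(i < n) (x i * y i).

Definition unit_vec n (u : vec n) : Prop := dot u u = 1.

Definition proj n (u x : vec n) : vec n := fun i => x i - dot x u * u i.

(* S_u : orthogonal projection of the set S onto u^perp *)
Definition proj_set n (u : vec n) (S : vec n -> Prop) : vec n -> Prop :=
  fun y => exists x, S x /\ y = proj u x.

Definition contains_translate n (u : vec n) (A B : vec n -> Prop) : Prop :=
  exists w : vec n, dot w u = 0 /\ forall y, B y -> A (vadd y w).

Definition image_set n (f : vec n -> vec n) (S : vec n -> Prop) : vec n -> Prop :=
  fun y => exists x, S x /\ y = f x.

Definition convex n (S : vec n -> Prop) : Prop :=
  forall x y t, 0 <= t <= 1 -> S x -> S y ->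
    S (vadd (vscale t x) (vscale (1 - t) y)).

(* convergence of a sequence in R^n (coordinatewise = Euclidean) *)
Definition vconv n (s : nat -> vec n) (l : vec n) : Prop :=
  forall i, Un_cv (fun k => s k i) (l i).

(* compactness in R^n, as sequential compactness (equivalent in R^n) *)
Definition compact_set n (S : vec n -> Prop) : Prop :=
  forall s : nat -> vec n, (forall k, S (s k)) ->
    exists (phi : nat -> nat) (l : vec n),
      (forall k, (phi k < phi (Datatypes.S k))%nat) /\ S l /\ vconv (fun k => s (phi k)) l.

Definition linear_map n (f : vec n -> vec n) : Prop :=
  (forall x y, f (vadd x y) = vadd (f x) (f y)) /\
  (forall a x, f (vscale a x) = vscale a (f x)).

Definition nonsingular n (f : vec n -> vec n) : Prop :=
  forall x, f x = @vzero n -> x = @vzero n.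

From Stdlib Require Import Reals Lra Psatz FunctionalExtensionality.
From mathcomp Require Import all_boot all_algebra.
From mathcomp Require Import Rstruct.
Import GRing.Theory Num.Theory.

Set Implicit Arguments. Unset Strict Implicit.
Open Scope R_scope.

(* For a unit vector u, the projection L_u contains a translate of K_u iff
   some translate K + w lies in L + Ru, i.e. every point of K + w differs from
   a point of L by a multiple of u ("translation modulo the line Ru",
   [translate_mod_line]).  This reformulation depends only on the line Ru, not
   on u itself, so "for all unit u" is the same as "for all nonzero d"
   ([projections_iff_lines]).  Finally psi maps the configuration
   (K, L, line Rd) onto (psi K, psi L, line R psi d) bijectively
   ([translate_mod_line_image]), and psi permutes the nonzero vectors because a
   linear map of R^n with trivial kernel is onto ([linear_surj], proved via
   invertibility of its matrix). *)

Section Vectors.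
Variable n : nat.
Implicit Types (x y u d w : vec n) (A B : vec n -> Prop).

Lemma vec_ext x y : (forall i, x i = y i) -> x = y.
Proof. exact: functional_extensionality. Qed.

Lemma dotE x y : dot x y = (\sum_(i < n) (x i * y i))%R.
Proof. by []. Qed.

Lemma dot_addl x y u : dot (vadd x y) u = dot x u + dot y u.
Proof.
rewrite !dotE; change (Rplus ?a ?b) with (a + b)%R; rewrite -big_split /=.
by apply: eq_bigr => i _; apply: Rmult_plus_distr_r.
Qed.

Lemma dot_scalel a x u : dot (vscale a x) u = a * dot x u.
Proof.
rewrite !dotE; change (Rmult a ?b) with (a * b)%R; rewrite mulr_sumr.
by apply: eq_bigr => i _; apply: Rmult_assoc.
Qed.

Lemma dot_scale2 a x : dot (vscale a x) (vscale a x) = a * a * dot x x.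
Proof.
rewrite !dotE; change (Rmult (a * a) ?b) with ((a * a) * b)%R; rewrite mulr_sumr.
by apply: eq_bigr => i _; rewrite /vscale /GRing.mul /=; ring.
Qed.

Lemma dot_proj u x v : dot (proj u x) v = dot x v - dot x u * dot u v.
Proof.
rewrite /proj !dotE; change (Rminus ?a ?b) with (a - b)%R.
change (Rmult (\sum_(i < n) (x i * u i))%R ?b)
  with ((\sum_(i < n) (x i * u i)) * b)%R.
rewrite mulr_sumr -sumrB; apply: eq_bigr => i _ /=.
rewrite /GRing.add /GRing.opp /GRing.mul /=.
move: (\big[_/_]_(_ < n) _) => s; ring.
Qed.

Lemma dot_ge0 x : 0 <= dot x x.
Proof. by rewrite dotE; apply/RleP/sumr_ge0 => i _; apply/RleP/Rle_0_sqr. Qed.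

Lemma dot_eq0 x : dot x x = 0 -> x = @vzero n.
Proof.
rewrite dotE => h; apply: vec_ext => i.
have sq_ge0 j : xpredT j -> (0 <= x j * x j)%R by move=> _; apply/RleP/Rle_0_sqr.
by have /Rmult_integral[] := @psumr_eq0P _ _ xpredT _ sq_ge0 h i isT.
Qed.

Lemma unit_vec_neq0 u : unit_vec u -> u <> @vzero n.
Proof.
rewrite /unit_vec => hu u0; move: hu; rewrite u0 dotE big1 => [|i _].
  by change (R0 = R1 -> False); lra.
by rewrite /vzero; change (Rmult R0 R0 = R0); ring.
Qed.

Lemma normalize d : d <> @vzero n -> exists c, c <> 0 /\ unit_vec (vscale c d).
Proof.
move=> d0; have dd_gt0 : 0 < dot d d.
  by case/Rle_lt_or_eq_dec: (dot_ge0 d) => // /esym/dot_eq0.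
have norm_gt0 : 0 < sqrt (dot d d) by apply: sqrt_lt_R0.
exists (/ sqrt (dot d d)); split; first by apply: Rinv_neq_0_compat; lra.
rewrite /unit_vec dot_scale2 -{3}(sqrt_sqrt (dot d d)); [field|]; lra.
Qed.

Definition translate_mod_line d A B : Prop :=
  exists w, forall x, B x -> exists y t, A y /\ vadd x w = vadd y (vscale t d).

Lemma contains_translateE u A B : unit_vec u ->
  contains_translate u (proj_set u A) (proj_set u B) <-> translate_mod_line u A B.
Proof.
rewrite /unit_vec => hu; split.
- move=> [w [_ H]]; exists w => x Bx.
  have [y [Ay e]] := H (proj u x) (ex_intro _ x (conj Bx erefl)).
  exists y, (dot x u - dot y u); split => //; apply: vec_ext => i.
  have := f_equal (fun f => f i) e; rewrite /vadd /proj /vscale; nra.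
- move=> [w H]; exists (proj u w); split; first by rewrite dot_proj hu; ring.
  move=> z [x [Bx ->]]; have [y [t [Ay e]]] := H x Bx.
  exists y; split => //.
  have := f_equal (fun f => dot f u) e; rewrite !dot_addl dot_scalel hu => ed.
  apply: vec_ext => i.
  have := f_equal (fun f => f i) e; rewrite /vadd /proj /vscale; nra.
Qed.

Lemma translate_mod_line_unscale c d A B :
  translate_mod_line (vscale c d) A B -> translate_mod_line d A B.
Proof.
move=> [w H]; exists w => x Bx; have [y [t [Ay e]]] := H x Bx.
exists y, (t * c); split => //; rewrite e; apply: vec_ext => i.
by rewrite /vadd /vscale; ring.
Qed.

Lemma projections_iff_lines A B :
  (forall u, unit_vec u -> contains_translate u (proj_set u A) (proj_set u B)) <->
  (forall d, d <> @vzero n -> translate_mod_line d A B).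
Proof.
split=> H.
- move=> d /normalize [c [_ hu]].
  by apply: (@translate_mod_line_unscale c); apply/contains_translateE/H.
- by move=> u hu; apply/contains_translateE/H/unit_vec_neq0.
Qed.

End Vectors.

Section LinearMaps.
Variable n : nat.
Variable psi : vec n -> vec n.
Hypothesis psi_lin : linear_map psi.
Hypothesis psi_ns : nonsingular psi.

Lemma linear_map0 : psi (@vzero n) = @vzero n.
Proof.
case: psi_lin => _ psiZ.
have -> : @vzero n = vscale 0 (@vzero n) by apply: vec_ext => i; rewrite /vscale /vzero; ring.
by rewrite psiZ; apply: vec_ext => i; rewrite /vscale /vzero; ring.
Qed.

Lemma linear_inj x y : psi x = psi y -> x = y.
Proof.
case: psi_lin => psiD psiZ e.
have : vadd x (vscale (-1) y) = @vzero n.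
  apply: psi_ns; rewrite psiD psiZ e.
  by apply: vec_ext => i; rewrite /vadd /vscale /vzero; ring.
move=> xy0; apply: vec_ext => i.
by have := f_equal (fun f => f i) xy0; rewrite /vadd /vscale /vzero; lra.
Qed.

Definition basis_vec (i : 'I_n) : vec n := fun j => if i == j then R1 else R0.

Lemma linear_sum (x : vec n) (s : seq 'I_n) :
  psi (fun j => \sum_(i <- s) (x i * basis_vec i j))%R =
  fun j => (\sum_(i <- s) (x i * psi (basis_vec i) j))%R.
Proof.
have psi0 := linear_map0; case: psi_lin => psiD psiZ.
elim: s => [|a s IH].
  have -> : (fun j => \sum_(i <- [::]) (x i * basis_vec i j))%R = @vzero n.
    by apply: vec_ext => j; rewrite big_nil.
  by rewrite psi0; apply: vec_ext => j; rewrite big_nil.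
have -> : (fun j => \sum_(i <- a :: s) (x i * basis_vec i j))%R =
   vadd (vscale (x a) (basis_vec a)) (fun j => \sum_(i <- s) (x i * basis_vec i j))%R.
  by apply: vec_ext => j; rewrite big_cons.
by rewrite psiD psiZ IH; apply: vec_ext => j; rewrite big_cons.
Qed.

Lemma linear_decomp (x : vec n) :
  psi x = fun j => (\sum_(i < n) (x i * psi (basis_vec i) j))%R.
Proof.
rewrite -linear_sum; congr psi; apply: vec_ext => j.
rewrite (bigD1 j) //= big1 => [|i /negbTE ij]; rewrite /basis_vec.
  by rewrite eqxx; change (x j = Rplus (Rmult (x j) R1) R0); ring.
by rewrite ij; change (Rmult (x i) R0 = R0); ring.
Qed.

(* A linear endomorphism of R^n with trivial kernel is onto: its matrix has
   trivial kernel, hence is invertible. *)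
Lemma linear_surj y : exists x, psi x = y.
Proof.
pose M : 'M[R]_n := (\matrix_(i, j) psi (basis_vec i) j)%R.
have psi_mx (r : 'rV[R]_n) : psi (fun j => r ord0 j) = fun j => (r *m M)%R ord0 j.
  rewrite linear_decomp; apply: vec_ext => j.
  by rewrite mxE; apply: eq_bigr => i _; rewrite mxE.
have kerM0 : kermx M = 0%R.
  apply/matrixP => i j; rewrite [RHS]mxE.
  have ker_i : psi (fun j => row i (kermx M) ord0 j) = @vzero n.
    by rewrite psi_mx -row_mul mulmx_ker row0; apply: vec_ext => k; rewrite mxE.
  by move: (psi_ns ker_i) => /(f_equal (fun f => f j)); rewrite mxE.
have M_unit : M \in unitmx by rewrite -row_free_unit -kermx_eq0 kerM0.
exists (fun j => ((\row_j y j) *m invmx M) ord0 j)%R.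
by rewrite psi_mx; apply: vec_ext => j; rewrite mulmxKV // mxE.
Qed.

Lemma translate_mod_line_image d A B :
  translate_mod_line (psi d) (image_set psi A) (image_set psi B) <->
  translate_mod_line d A B.
Proof.
have [psiD psiZ] := psi_lin; split.
- move=> [w' H]; have [w ew] := linear_surj w'; subst w'; exists w => x Bx.
  have [_ [t [[y [Ay ->]] e]]] := H (psi x) (ex_intro _ x (conj Bx erefl)).
  exists y, t; split => //; apply: linear_inj.
  by rewrite psiD e psiD psiZ.
- move=> [w H]; exists (psi w) => _ [x [Bx ->]].
  have [y [t [Ay e]]] := H x Bx.
  exists (psi y), t; split; first by exists y.
  by rewrite -psiD e psiD psiZ.
Qed.

End LinearMaps.

Theorem proposition4p2 (n : nat) (K L : vec n -> Prop) (psi : vec n -> vec n)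
  (hK : compact_set K) (hKc : convex K) (hL : compact_set L) (hLc : convex L)
  (hlin : linear_map psi) (hns : nonsingular psi) :
  (forall u : vec n, unit_vec u ->
     contains_translate u (proj_set u L) (proj_set u K)) <->
  (forall u : vec n, unit_vec u ->
     contains_translate u (proj_set u (image_set psi L)) (proj_set u (image_set psi K))).
Proof.
rewrite !projections_iff_lines; split=> H d d0.
-
  have [e de] := linear_surj hlin hns d.
  have e0 : e <> @vzero n by move=> e0; apply: d0; rewrite -de e0 linear_map0.
  rewrite -de; apply/(translate_mod_line_image hlin hns).
  exact: H.
- apply/(translate_mod_line_image hlin hns); apply: H.
  by move=> /hns.
Qed.
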